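(* Let $d\in\mathbb{N}$ and $N=2^d$. There exists a sequence of side information $a_{1:N}\in(\{0,1\}^d)^N$ such that for every probabilistic predictor $\rho$ there exists $\mathcal{S}\in\mathcal{P}_d$ such that, for the labels $x_t:=h_{\mathcal{S}}(a_t)$ ($t=1,\dots,N$), one has $\mathcal{L}_N(\rho)\ge d$.
   Context: $\mathcal{P}_d$ is the power set of $\{1,\dots,d\}$; for $\mathcal{S}\in\mathcal{P}_d$ and $a\in\{0,1\}^d$, $h_{\mathcal{S}}(a)=\bigwedge_{i\in\mathcal{S}}a^i$ (equal to $1$ if $\mathcal{S}=\emptyset$). A probabilistic predictor $\rho$ is a sequence of rules that at each time $t$, given past labels $x_{<t}$ and side information $a_{1:t}$, outputs a probability distribution $\rho_t(\cdot\mid x_{<t};a_{1:t})$ on $\{0,1\}$. Its cumulative log-loss is $\mathcal{L}_n(\rho):=-\log_2\prod_{t=1}^n\rho_t(x_t\mid x_{<t};a_{1:t})$ (possibly $+\infty$). *)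

From Stdlib Require Import Reals.
From mathcomp Require Import all_boot.
Set Implicit Arguments. Unset Strict Implicit. Unset Printing Implicit Defensive.

Local Open Scope R_scope.

Definition bvec (d : nat) := 'I_d -> bool.

Definition hS (d : nat) (S : {set 'I_d}) (a : bvec d) : bool :=
  [forall i, (i \in S) ==> a i].

(* A probabilistic predictor: at time t (1-based), given the past labels
   x_{<t} = [x_1;...;x_{t-1}] and side info a_{1:t} = [a_1;...;a_t],
   returns the probability it assigns to label 1 (label 0 gets 1 - that). *)
Record predictor (d : nat) := Predictor {
  rho_one : nat -> seq bool -> seq (bvec d) -> R;
  rho_one_range : forall t xs as_, 0 <= rho_one t xs as_ <= 1
}.

Definition rho_prob d (rho : predictor d) (t : nat) (xs : seq bool)
  (as_ : seq (bvec d)) (b : bool) : R :=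
  if b then rho_one rho t xs as_ else 1 - rho_one rho t xs as_.

Definition seq_prob d (rho : predictor d) (n : nat) (xs : seq bool)
  (as_ : seq (bvec d)) : R :=
  foldr (fun t acc =>
           rho_prob rho t (take t.-1 xs) (take t as_) (nth false xs t.-1) * acc)
        1 (iota 1 n).

Inductive eR := Fin of R | PInf.

Definition eR_ge (x : eR) (r : R) : Prop :=
  match x with Fin y => r <= y | PInf => True end.

Definition log2 (x : R) : R := ln x / ln 2.

Definition cum_logloss d (rho : predictor d) (n : nat) (xs : seq bool)
  (as_ : seq (bvec d)) : eR :=
  let P := seq_prob rho n xs as_ in
  if Req_EM_T P 0 then PInf else Fin (- log2 P).

(* The first d side-information vectors are the "all ones but coordinate k"
   vectors e_k, on which h_S(e_k) = [k \notin S]; so the d labels x_1, ..., x_d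
   can be chosen freely by choosing S.  Against a given predictor, choose each
   x_k adversarially as a label to which the predictor assigns probability at
   most 1/2.  The first d factors of the likelihood are then at most 1/2 and
   the remaining ones at most 1, so the likelihood is at most 2^-d, i.e. the
   log-loss is at least d. *)

From Stdlib Require Import Reals Lra.
From mathcomp Require Import all_boot.

Set Implicit Arguments.
Unset Strict Implicit.
Unset Printing Implicit Defensive.

Local Open Scope R_scope.

Section FoldrProduct.

Variable f : nat -> R.
Hypothesis f_unit : forall t, 0 <= f t <= 1.

Let prod s := foldr (fun t acc => f t * acc) 1 s.

Lemma foldr_mul_unit s : 0 <= prod s <= 1.
Proof.
elim: s => [|x s [IH0 IH1]] /=; first lra.
have [fx0 fx1] := f_unit x; split; first exact: Rmult_le_pos.
by rewrite -(Rmult_1_r 1); apply: Rmult_le_compat.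
Qed.

Lemma foldr_mul_cat_le_pow_half s1 s2 :
  {in s1, forall t, f t <= /2} -> prod (s1 ++ s2) <= (/2) ^ size s1.
Proof.
elim: s1 => [|x s1 IH] /= half_s1; first exact: (proj2 (foldr_mul_unit s2)).
apply: Rmult_le_compat.
- exact: (proj1 (f_unit x)).
- exact: (proj1 (foldr_mul_unit _)).
- by apply: half_s1; rewrite mem_head.
- by apply: IH => t t_s1; apply: half_s1; rewrite in_cons t_s1 orbT.
Qed.

End FoldrProduct.

Lemma rho_prob_unit d (rho : predictor d) t xs as_ b :
  0 <= rho_prob rho t xs as_ b <= 1.
Proof.
by have := rho_one_range rho t xs as_; rewrite /rho_prob; case: b; lra.
Qed.

Lemma seq_prob_ge0 d (rho : predictor d) n xs as_ : 0 <= seq_prob rho n xs as_.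
Proof.
apply: (proj1 (@foldr_mul_unit
  (fun t => rho_prob rho t (take t.-1 xs) (take t as_) (nth false xs t.-1)) _ _)).
by move=> t; apply: rho_prob_unit.
Qed.

Lemma seq_prob_le_pow_half d (rho : predictor d) m n xs as_ : (m <= n)%nat ->
  (forall t, (0 < t <= m)%nat ->
     rho_prob rho t (take t.-1 xs) (take t as_) (nth false xs t.-1) <= /2) ->
  seq_prob rho n xs as_ <= (/2) ^ m.
Proof.
move=> le_mn half_m; rewrite /seq_prob -(subnKC le_mn) iotaD.
have := @foldr_mul_cat_le_pow_half
  (fun t => rho_prob rho t (take t.-1 xs) (take t as_) (nth false xs t.-1))
  (fun t => rho_prob_unit rho _ _ _ _) (iota 1 m) (iota (1 + m) (n - m)).
rewrite size_iota; apply.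
by move=> t; rewrite mem_iota add1n ltnS=> /half_m.
Qed.

Lemma cum_logloss_ge d (rho : predictor d) m n xs as_ :
  seq_prob rho n xs as_ <= (/2) ^ m -> eR_ge (cum_logloss rho n xs as_) (INR m).
Proof.
rewrite /cum_logloss; set P := seq_prob rho n xs as_.
case: Req_EM_T => //= P_neq0 P_le.
have P_gt0 : 0 < P by have := seq_prob_ge0 rho n xs as_; rewrite -/P; lra.
have ln2_gt0 : 0 < ln 2 by rewrite -ln_1; apply: ln_increasing; lra.
have ln_P_le : ln P <= - INR m * ln 2.
  have -> : - INR m * ln 2 = ln ((/2) ^ m) by rewrite ln_pow ?ln_Rinv; lra.
  case: (Rle_lt_or_eq_dec _ _ P_le) => [P_lt|->]; last lra.
  exact/Rlt_le/ln_increasing.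
rewrite /log2; apply/(Rmult_le_reg_r (ln 2)) => //.
have -> : - (ln P / ln 2) * ln 2 = - ln P by field; lra.
lra.
Qed.

Section Adversary.

Variables (d : nat) (rho : predictor d) (as_ : seq (bvec d)).

Definition worst_label t xs : bool :=
  if Rle_dec (rho_one rho t xs (take t as_)) (/2) then true else false.

Fixpoint adversary k : seq bool :=
  if k is k'.+1 then rcons (adversary k') (worst_label k (adversary k'))
  else [::].

Lemma rho_prob_worst_label t xs :
  rho_prob rho t xs (take t as_) (worst_label t xs) <= /2.
Proof. by rewrite /worst_label /rho_prob; case: Rle_dec => /=; lra. Qed.

Lemma size_adversary k : size (adversary k) = k.
Proof. by elim: k => //= k IH; rewrite size_rcons IH. Qed.

Lemma take_adversary m k : (k <= m)%nat -> take k (adversary m) = adversary k.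
Proof.
elim: m => [|m IH]; first by rewrite leqn0 => /eqP ->.
rewrite leq_eqVlt => /orP [/eqP ->|lt_km].
  by rewrite take_oversize ?size_adversary.
by rewrite /= -cats1 takel_cat ?size_adversary // IH.
Qed.

Lemma nth_adversary m k : (k < m)%nat ->
  nth false (adversary m) k = worst_label k.+1 (adversary k).
Proof.
move=> lt_km; rewrite -(nth_take false (ltnSn k)) take_adversary //=.
by rewrite nth_rcons size_adversary ltnn eqxx.
Qed.

Lemma seq_prob_adversary m n xs : (m <= n)%nat -> take m xs = adversary m ->
  seq_prob rho n xs as_ <= (/2) ^ m.
Proof.
move=> le_mn xs_adv; apply: seq_prob_le_pow_half => // -[//|k] /= lt_km.
have le_km : (k <= m)%nat by exact: ltnW.
rewrite -(take_takel xs le_km) xs_adv take_adversary //.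
rewrite -(nth_take false lt_km) xs_adv nth_adversary //.
exact: rho_prob_worst_label.
Qed.

End Adversary.

Definition coord_off d (k : nat) : bvec d := fun i => i != k :> nat.

Lemma hS_coord_off d (S : {set 'I_d}) (i : 'I_d) :
  hS S (coord_off i) = (i \notin S).
Proof.
apply/forallP/idP => [/(_ i)/implyP | i_notS j].
  by rewrite /coord_off eqxx; case: (i \in S) => // /(_ isT).
by apply/implyP => j_S; apply: contraNneq i_notS => /val_inj <-.
Qed.

Lemma map_hS_coord_off d (x : seq bool) : size x = d ->
  [seq hS [set i : 'I_d | ~~ nth false x i] v | v <- mkseq (@coord_off d) d] = x.
Proof.
move=> size_x; apply: (@eq_from_nth _ false); first by rewrite size_map size_mkseq.
move=> k; rewrite size_map size_mkseq => lt_kd.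
rewrite (nth_map (fun _ => true)) ?size_mkseq // nth_mkseq //.
by rewrite -[k]/(val (Ordinal lt_kd)) hS_coord_off inE negbK.
Qed.

Theorem mainTheorem4 (d : nat) :
  exists a : seq (bvec d), size a = (2 ^ d)%nat /\
    forall rho : predictor d, exists S : {set 'I_d},
      eR_ge (cum_logloss rho (2 ^ d) [seq hS S v | v <- a] a) (INR d).
Proof.
have le_d_pow : (d <= 2 ^ d)%nat by exact/ltnW/ltn_expl.
set a := mkseq (@coord_off d) d ++ nseq (2 ^ d - d) (fun _ => true).
have size_a : size a = (2 ^ d)%nat by rewrite size_cat size_mkseq size_nseq subnKC.
exists a; split => // rho.
set x := adversary rho a d.
exists [set i : 'I_d | ~~ nth false x i].
apply/cum_logloss_ge/seq_prob_adversary => //.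
by rewrite map_cat map_hS_coord_off ?size_adversary // take_size_cat ?size_adversary.
Qed.
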